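(* Let $X_1, X_2 \subseteq \mathrm{VF}^n\times\mathrm{VF}^m$ with $\mathrm{pr}_{\le n}X_1=\mathrm{pr}_{\le n}X_2=Z$, let $\bar a\in\mathrm{VF}^n$, and suppose $\lim_{Z\to\bar a}X_i = L_i$ for $i=1,2$. Then $\lim_{Z\to\bar a}(X_1\cup X_2)=L_1\cup L_2$.
   Context: $\mathrm{VF}$ is an algebraically closed valued field with value group $\Gamma$, valuation $v$ and the valuation topology. For $\bar b\in\mathrm{VF}^k$, $\epsilon\in\Gamma$, $\mathfrak{o}(\bar b,\epsilon)=\{\bar c: v(c_i-b_i)>\epsilon\text{ for all }i\}$. For $X\subseteq\mathrm{VF}^n\times\mathrm{VF}^m$, $\mathrm{pr}_{\le n}X$ is its projection to $\mathrm{VF}^n$ and $\mathrm{fib}(X,\bar c)=\{\bar d:(\bar c,\bar d)\in X\}$. A set $L\subseteq\mathrm{VF}^m$ is a limit set of $X$ at $\bar a$ if for every $\epsilon\in\Gamma$ there is $\delta\in\Gamma$ such that whenever $\bar c\in\mathfrak{o}(\bar a,\delta)\cap(\mathrm{pr}_{\le n}X\setminus\{\bar a\})$, $\mathrm{fib}(X,\bar c)\subseteq\bigcup_{\bar b\in L'}\mathfrak{o}(\bar b,\epsilon)$ for some $L'\subseteq L$; it is minimal if no proper subset is a limit set of $X$ at $\bar a$. With $Z=\mathrm{pr}_{\le n}X$, the notation $\lim_{Z\to\bar a}X=L$ means that $L$ is a topologically closed minimal limit set of $X$ at $\bar a$. *)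

From HB Require Import structures.
From mathcomp Require Import all_boot all_order all_algebra.
Set Implicit Arguments. Unset Strict Implicit. Unset Printing Implicit Defensive.
Import Order.TTheory GRing.Theory Num.Theory.
Local Open Scope ring_scope.

Definition ordered_abelian_group (G : porderZmodType) : Prop :=
  (forall x y : G, (x <= y) || (y <= x)) /\
  (forall x y z : G, x <= y -> x + z <= y + z).

(* Extended value group Gamma ∪ {oo}: None stands for oo. *)
Definition ole (G : porderZmodType) (x y : option G) : bool :=
  match x, y with
  | _, None => true
  | None, Some _ => false
  | Some a, Some b => a <= b
  end.

Definition oadd (G : porderZmodType) (x y : option G) : option G :=
  match x, y with
  | Some a, Some b => Some (a + b)
  | _, _ => None
  end.

Definition vgt (G : porderZmodType) (eps : G) (x : option G) : bool :=
  match x with None => true | Some b => eps < b end.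

Definition is_valuation (K : fieldType) (G : porderZmodType) (v : K -> option G) : Prop :=
  [/\ forall x, v x = None <-> x = 0,
      forall x y, v (x * y) = oadd (v x) (v y),
      forall x y (g : option G), ole g (v x) -> ole g (v y) -> ole g (v (x + y))
    & forall g : G, exists x, v x = Some g].

Section VF.
Variables (K : fieldType) (G : porderZmodType) (v : K -> option G).

Definition ball_o (k : nat) (b : 'I_k -> K) (eps : G) (c : 'I_k -> K) : Prop :=
  forall i, vgt eps (v (c i - b i)).

Definition pr_le (n m : nat) (X : ('I_n -> K) * ('I_m -> K) -> Prop) (c : 'I_n -> K) : Prop :=
  exists d, X (c, d).

Definition fib (n m : nat) (X : ('I_n -> K) * ('I_m -> K) -> Prop) (c : 'I_n -> K) (d : 'I_m -> K) : Prop :=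
  X (c, d).

Definition is_limit_set (n m : nat) (X : ('I_n -> K) * ('I_m -> K) -> Prop)
    (a : 'I_n -> K) (L : ('I_m -> K) -> Prop) : Prop :=
  forall eps : G, exists delta : G, forall c : 'I_n -> K,
    ball_o a delta c -> pr_le X c -> c <> a ->
    exists L' : ('I_m -> K) -> Prop, (forall b, L' b -> L b) /\
      (forall d, fib X c d -> exists b, L' b /\ ball_o b eps d).

Definition is_min_limit_set (n m : nat) (X : ('I_n -> K) * ('I_m -> K) -> Prop)
    (a : 'I_n -> K) (L : ('I_m -> K) -> Prop) : Prop :=
  is_limit_set X a L /\
  forall L' : ('I_m -> K) -> Prop,
    (forall b, L' b -> L b) -> (exists b, L b /\ ~ L' b) -> ~ is_limit_set X a L'.

Definition vclosed (m : nat) (L : ('I_m -> K) -> Prop) : Prop :=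
  forall b, (forall eps : G, exists c, L c /\ ball_o b eps c) -> L b.

(* lim_{Z -> a} X = L, where Z = pr_{<=n} X *)
Definition lim_is (n m : nat) (X : ('I_n -> K) * ('I_m -> K) -> Prop)
    (a : 'I_n -> K) (L : ('I_m -> K) -> Prop) : Prop :=
  vclosed L /\ is_min_limit_set X a L.
End VF.

From HB Require Import structures.
From mathcomp Require Import all_boot all_order all_algebra.
From Stdlib Require Import Classical.
Set Implicit Arguments. Unset Strict Implicit. Unset Printing Implicit Defensive.
Import Order.TTheory GRing.Theory Num.Theory.
Local Open Scope ring_scope.

(* In an ultrametric space a closed minimal limit set L is discrete: a point
   b of L that is a limit of other points of L could be deleted, since
   every fibre point close to b is then equally close to one of those other
   points. Hence any b has a ball around it meeting L1 ∪ L2 at most in b.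
   If a limit set L' of X1 ∪ X2 inside L1 ∪ L2 misses some b of, say, L1,
   it misses a whole ball around b, so fibre points of X1 near the base point
   stay away from b and L1 minus b is still a limit set of X1, contradicting
   minimality of L1. *)

Section OrderedGroup.
Variables (G : porderZmodType) (HG : ordered_abelian_group G).

Lemma le_maxl_total (x y : G) : x <= Num.max x y.
Proof. by rewrite comparable_le_max ?lexx //; apply: HG.1. Qed.

Lemma le_maxr_total (x y : G) : y <= Num.max x y.
Proof. by rewrite comparable_le_max ?lexx ?orbT //; apply: HG.1. Qed.

Lemma double_eq0 (w : G) : w + w = 0 -> w = 0.
Proof.
move=> ww0; have [tot leD2r] := HG.
by case/orP: (tot 0 w) => hw; have := leD2r _ _ w hw;
  rewrite add0r ww0 => hw'; apply: le_anti; rewrite hw hw'.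
Qed.

End OrderedGroup.

Section Valuation.
Variables (K : fieldType) (G : porderZmodType) (v : K -> option G).
Hypotheses (HG : ordered_abelian_group G) (Hv : is_valuation v).

Lemma valuation1 : v 1 = Some 0.
Proof.
have [v0 vM _ _] := Hv.
case v1: (v 1) => [u|]; last by move/v0: v1 => /eqP; rewrite oner_eq0.
have := vM 1 1; rewrite mulr1 v1 /= => -[uu]; congr Some.
by apply: (@addrI _ u); rewrite addr0 -uu.
Qed.

Lemma valuationN1 : v (-1) = Some 0.
Proof.
have [v0 vM _ _] := Hv.
case vN1: (v (-1)) => [w|]; last by move/v0: vN1 => /eqP; rewrite oppr_eq0 oner_eq0.
have := vM (-1) (-1); rewrite mulrNN mulr1 valuation1 vN1 /= => -[ww].
by rewrite (double_eq0 HG (esym ww)).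
Qed.

Lemma vgtN eps x : vgt eps (v x) -> vgt eps (v (- x)).
Proof.
have [_ vM _ _] := Hv.
by rewrite -mulN1r vM valuationN1; case: (v x) => //= g; rewrite add0r.
Qed.

Lemma vgt_ole eps (g h : option G) : vgt eps g -> ole g h -> vgt eps h.
Proof. by case: g h => [g|] [h|] //=; apply: lt_le_trans. Qed.

Lemma vgtD eps x y : vgt eps (v x) -> vgt eps (v y) -> vgt eps (v (x + y)).
Proof.
have [_ _ vD _] := Hv; have cmp := HG.1.
case vx: (v x) => [g|] /= hx; case vy: (v y) => [h|] /= hy.
- apply: (@vgt_ole _ (Some (Num.min g h))).
    by rewrite /= comparable_lt_min ?hx ?hy //; apply: cmp.
  by apply: vD; rewrite ?vx ?vy /= !comparable_ge_min ?lexx ?orbT //; apply: cmp.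
- by apply: (@vgt_ole _ (Some g)) => //; apply: vD; rewrite ?vx ?vy /=.
- by apply: (@vgt_ole _ (Some h)) => //; apply: vD; rewrite ?vx ?vy /=.
- by apply: (@vgt_ole _ None) => //; apply: vD; rewrite ?vx ?vy.
Qed.

Lemma ball_o_sym k (x y : 'I_k -> K) eps : ball_o v x eps y -> ball_o v y eps x.
Proof. by move=> xy i; rewrite -opprB; apply/vgtN/xy. Qed.

Lemma ball_o_trans k (x y z : 'I_k -> K) eps :
  ball_o v x eps y -> ball_o v y eps z -> ball_o v x eps z.
Proof. by move=> xy yz i; rewrite -(subrK (y i) (z i)) -addrA; apply: vgtD. Qed.

End Valuation.

Lemma ball_o_le (K : fieldType) (G : porderZmodType) (v : K -> option G)
    k (x y : 'I_k -> K) eps eps' :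
  eps <= eps' -> ball_o v x eps' y -> ball_o v x eps y.
Proof. by move=> le_eps xy i; move: (xy i); case: (v _) => //= g; apply: le_lt_trans. Qed.

Section LimitSets.
Variables (K : fieldType) (G : porderZmodType) (v : K -> option G).
Hypotheses (HG : ordered_abelian_group G) (Hv : is_valuation v).
Variables (n m : nat) (a : 'I_n -> K).
Implicit Types (X : ('I_n -> K) * ('I_m -> K) -> Prop) (L : ('I_m -> K) -> Prop).

Lemma vclosed_far L b :
  vclosed v L -> ~ L b -> exists r, forall c, L c -> ~ ball_o v b r c.
Proof.
move=> closedL Lb'; apply: NNPP => no_r; apply/Lb'/closedL => eps.
apply: NNPP => no_c; apply: no_r; exists eps => c Lc bc; apply: no_c; by exists c.
Qed.

Lemma vclosedU L1 L2 :
  vclosed v L1 -> vclosed v L2 -> vclosed v (fun b => L1 b \/ L2 b).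
Proof.
move=> closed1 closed2 b near_b; apply: NNPP => /not_or_and[L1b' L2b'].
have [r1 far1] := vclosed_far closed1 L1b'; have [r2 far2] := vclosed_far closed2 L2b'.
have [c [[Lc|Lc] bc]] := near_b (Num.max r1 r2).
- exact: far1 Lc (ball_o_le (le_maxl_total HG r1 r2) bc).
- exact: far2 Lc (ball_o_le (le_maxr_total HG r1 r2) bc).
Qed.

Lemma is_limit_setU X1 X2 L1 L2 :
  (forall c, pr_le X1 c <-> pr_le X2 c) ->
  is_limit_set v X1 a L1 -> is_limit_set v X2 a L2 ->
  is_limit_set v (fun p => X1 p \/ X2 p) a (fun b => L1 b \/ L2 b).
Proof.
move=> pr12 lim1 lim2 eps.
have [d1 cover1] := lim1 eps; have [d2 cover2] := lim2 eps.
exists (Num.max d1 d2) => c ac [d Xd] ca.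
have pr1 : pr_le X1 c by case: Xd => Xd; [exists d | apply/pr12; exists d].
have pr2 : pr_le X2 c by apply/pr12.
have [S1 [S1L1 S1cov]] := cover1 c (ball_o_le (le_maxl_total HG d1 d2) ac) pr1 ca.
have [S2 [S2L2 S2cov]] := cover2 c (ball_o_le (le_maxr_total HG d1 d2) ac) pr2 ca.
exists (fun b => S1 b \/ S2 b); split; first by move=> b [/S1L1|/S2L2]; auto.
move=> d' [/S1cov|/S2cov] [b [Sb bd]]; exists b; auto.
Qed.

(* A point b of L approximated by other points of L is superfluous: a fibre
   point covered by b is covered, at the same radius, by a point of L close
   to b. *)
Lemma is_limit_setD1_cluster X L b :
  is_limit_set v X a L ->
  (forall r, exists c, [/\ L c, ball_o v b r c & c <> b]) ->
  is_limit_set v X a (fun c => L c /\ c <> b).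
Proof.
move=> limL cluster eps; have [delta cover] := limL eps.
exists delta => c ac prc ca; have [S [SL Scov]] := cover c ac prc ca.
have [b' [Lb' bb' b'b]] := cluster eps.
exists (fun x => (S x /\ x <> b) \/ x = b'); split.
  by move=> x [[/SL ? ?]|->].
move=> d fd; have [b1 [Sb1 b1d]] := Scov d fd.
have [b1b|b1b] := classic (b1 = b).
- exists b'; split; first by right.
  by apply: (ball_o_trans HG Hv (ball_o_sym HG Hv bb')); rewrite -b1b.
- by exists b1; split; first left.
Qed.

Lemma min_limit_setD1 X L b :
  is_min_limit_set v X a L -> L b -> ~ is_limit_set v X a (fun c => L c /\ c <> b).
Proof. by move=> [_ minL] Lb; apply: minL; [move=> c [] | exists b; split=> // -[]]. Qed.

Lemma min_limit_set_isolated X L b :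
  is_min_limit_set v X a L -> L b ->
  exists r, forall c, L c -> ball_o v b r c -> c = b.
Proof.
move=> minL Lb; apply: NNPP => not_iso; apply: (min_limit_setD1 minL Lb).
apply: is_limit_setD1_cluster minL.1 _ => r; apply: NNPP => no_c; apply: not_iso.
exists r => c Lc bc; apply: NNPP => cb; apply: no_c; by exists c.
Qed.

Lemma lim_is_isolated X L b :
  lim_is v X a L -> exists r, forall c, L c -> ball_o v b r c -> c = b.
Proof.
move=> [closedL minL]; have [Lb|Lb'] := classic (L b).
  exact: min_limit_set_isolated minL Lb.
by have [r far] := vclosed_far closedL Lb'; exists r => c Lc /(far c Lc).
Qed.

(* If some limit set of a larger set X stays away from b, then fibre points of
   X1 near a are far from b. *)
Lemma is_limit_setD1_sub X1 X L1 L b r :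
  (forall p, X1 p -> X p) ->
  is_limit_set v X1 a L1 -> is_limit_set v X a L ->
  (forall c, L c -> ~ ball_o v b r c) ->
  is_limit_set v X1 a (fun c => L1 c /\ c <> b).
Proof.
move=> X1X lim1 limX far eps; pose e := Num.max eps r.
have [d1 cover1] := lim1 e; have [d cover] := limX e.
exists (Num.max d1 d) => c ac [y X1y] ca.
have [S1 [S1L1 S1cov]] :=
  cover1 c (ball_o_le (le_maxl_total HG d1 d) ac) (ex_intro _ y X1y) ca.
have [S [SL Scov]] :=
  cover c (ball_o_le (le_maxr_total HG d1 d) ac) (ex_intro _ y (X1X _ X1y)) ca.
exists (fun x => S1 x /\ x <> b); split; first by move=> x [/S1L1].
move=> z fz; have [b1 [S1b1 b1z]] := S1cov z fz.
have [b1b|b1b] := classic (b1 = b); last first.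
  by exists b1; split=> //; apply: ball_o_le (le_maxl_total HG eps r) b1z.
have [b' [Sb' b'z]] := Scov z (X1X _ fz).
have bb' : ball_o v b e b'.
  by rewrite -b1b; apply: (ball_o_trans HG Hv b1z (ball_o_sym HG Hv b'z)).
by case: (far b' (SL _ Sb')); apply: ball_o_le (le_maxr_total HG eps r) bb'.
Qed.

End LimitSets.

Theorem lemma3p3 (K : closedFieldType) (G : porderZmodType) (v : K -> option G)
  (HG : ordered_abelian_group G) (Hv : is_valuation v)
  (n m : nat) (X1 X2 : ('I_n -> K) * ('I_m -> K) -> Prop)
  (Z : ('I_n -> K) -> Prop) (a : 'I_n -> K) (L1 L2 : ('I_m -> K) -> Prop) :
  (forall c, pr_le X1 c <-> Z c) -> (forall c, pr_le X2 c <-> Z c) ->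
  lim_is v X1 a L1 -> lim_is v X2 a L2 ->
  lim_is v (fun p => X1 p \/ X2 p) a (fun b => L1 b \/ L2 b).
Proof.
move=> prZ1 prZ2 lim1 lim2; have [closed1 [limset1 min1]] := lim1.
have [closed2 [limset2 min2]] := lim2.
have pr12 c : pr_le X1 c <-> pr_le X2 c by rewrite prZ1 prZ2.
split; first exact: (vclosedU HG closed1 closed2).
split; first exact: (is_limit_setU HG pr12 limset1 limset2).
move=> L L_sub [b [L12b Lb']] limL.
have [r1 iso1] := lim_is_isolated HG Hv b lim1.
have [r2 iso2] := lim_is_isolated HG Hv b lim2.
have far c : L c -> ~ ball_o v b (Num.max r1 r2) c.
  move=> Lc bc; apply: Lb'; case: (L_sub c Lc) => L12c.
  - by rewrite -(iso1 c L12c (ball_o_le (le_maxl_total HG r1 r2) bc)).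
  - by rewrite -(iso2 c L12c (ball_o_le (le_maxr_total HG r1 r2) bc)).
case: L12b => Lb.
- apply: (min_limit_setD1 (conj limset1 min1) Lb).
  by apply: (is_limit_setD1_sub HG Hv _ limset1 limL far) => p; left.
- apply: (min_limit_setD1 (conj limset2 min2) Lb).
  by apply: (is_limit_setD1_sub HG Hv _ limset2 limL far) => p; right.
Qed.
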